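(* Let $N\ge1$, let $\xi_0,\dots,\xi_N$ be the LGL nodes on $[-1,1]$ with LGL weights $\omega_0,\dots,\omega_N$, $\mathcal{M}=\mathrm{diag}(\omega_0,\dots,\omega_N)$, and let $\mathcal{V}_{ij}=L_j(\xi_i)$ ($i,j=0,\dots,N$) be the Vandermonde matrix of the normalized Legendre polynomials $L_j=\sqrt{(2j+1)/2}\,P_j$. Let $\mathcal{C}=\mathrm{diag}(\sigma_0,\dots,\sigma_N)$ be a diagonal (modal cutoff) matrix with real entries, and define the filter matrix $\mathcal{F}=\mathcal{V}\,\mathcal{C}\,\mathcal{V}^{-1}$ and the auxiliary filter matrix $\widetilde{\mathcal{F}}=\mathcal{M}^{-1}\mathcal{F}^T\mathcal{M}$. Then $\widetilde{\mathcal{F}}=\mathcal{F}$.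
   Context: The LGL nodes are $\xi_0=-1$, $\xi_N=1$ and the zeros of $P_N'$ (with $P_N$ the degree-$N$ Legendre polynomial); the LGL weights are $\omega_i=\frac{2}{N(N+1)P_N(\xi_i)^2}$. $\mathcal{V}$ is invertible since the $L_j$ form a basis of polynomials of degree $\le N$ and the nodes are distinct. *)

From HB Require Import structures.
From mathcomp Require Import all_boot all_order all_algebra.
From mathcomp Require Import reals.
Set Implicit Arguments. Unset Strict Implicit. Unset Printing Implicit Defensive.
Import Order.TTheory GRing.Theory Num.Theory.
Local Open Scope ring_scope.

Section LGL.
Variable R : realType.

Definition legendre (n : nat) : {poly R} :=
  ((2 ^ n * n`!)%:R)^-1 *: (('X ^+ 2 - 1) ^+ n)^`(n).

Definition nlegendre (j : nat) (x : R) : R :=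
  Num.sqrt (((2 * j + 1)%:R) / 2) * (legendre j).[x].

Definition LGL_nodes (N : nat) (xi : 'I_N.+1 -> R) : Prop :=
  [/\ xi ord0 = -1, xi ord_max = 1,
      (forall i j : 'I_N.+1, (i < j)%N -> xi i < xi j) &
      (forall i : 'I_N.+1, (0 < i)%N -> (i < N)%N -> root (legendre N)^`() (xi i))].

Definition LGL_weight (N : nat) (xi : 'I_N.+1 -> R) (i : 'I_N.+1) : R :=
  2 / ((N * N.+1)%:R * ((legendre N).[xi i]) ^+ 2).

Definition mass_mx (N : nat) (xi : 'I_N.+1 -> R) : 'M[R]_N.+1 :=
  diag_mx (\row_i LGL_weight xi i).

Definition vander_mx (N : nat) (xi : 'I_N.+1 -> R) : 'M[R]_N.+1 :=
  \matrix_(i, j) nlegendre j (xi i).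

Definition filter_mx (N : nat) (xi : 'I_N.+1 -> R) (sigma : 'rV[R]_N.+1)
  : 'M[R]_N.+1 :=
  vander_mx xi *m diag_mx sigma *m invmx (vander_mx xi).

Definition aux_filter_mx (N : nat) (xi : 'I_N.+1 -> R) (sigma : 'rV[R]_N.+1)
  : 'M[R]_N.+1 :=
  invmx (mass_mx xi) *m (filter_mx xi sigma)^T *m mass_mx xi.

End LGL.

(* The filter is self-adjoint for the discrete inner product <u, v> = u^T M v
   because the Gram matrix V^T M V is diagonal; then the diagonal C commutes
   with V^T M V, which is exactly M^-1 F^T M = F.  Diagonality is the discrete
   orthogonality of the Legendre polynomials, i.e. exactness of the LGL rule up
   to degree 2N - 1.  The interpolatory rule with weights w_j = int l_j is exact
   up to degree N, hence up to degree 2N - 1 because (1 - x^2) P_N' vanishes at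
   every node and is orthogonal to all polynomials of degree N - 2.  The LGL
   weights only need to be proportional to the w_j: applying the rule to
   P_N (1 - x^2) P_N' / ((x - xi_a) (x - xi_b)) and using the Legendre equation
   ((1 - x^2) P_N')' = -N(N+1) P_N gives w_a P_N(xi_a)^2 = w_b P_N(xi_b)^2. *)

From HB Require Import structures.
From mathcomp Require Import all_boot all_order all_algebra.
From mathcomp Require Import reals.
From mathcomp Require Import ring zify.
Set Implicit Arguments. Unset Strict Implicit. Unset Printing Implicit Defensive.
Import Order.TTheory GRing.Theory Num.Theory.
Local Open Scope ring_scope.

Section PolyIntegral.
Variable R : numFieldType.
Implicit Types p q f g : {poly R}.

Lemma size_deriv p : size p^`() = (size p).-1.
Proof.
have [le_p1|lt_1p] := leqP (size p) 1.
  by rewrite {1}[p]size1_polyC // derivC size_poly0 -subn1 (eqnP le_p1).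
rewrite size_poly_eq // mulrn_eq0 -subn2 -subSn // subn2.
by rewrite lead_coef_eq0 -size_poly_eq0 -(subnKC lt_1p).
Qed.

Lemma deriv_eq0 p : p^`() = 0 -> p = (p`_0)%:P.
Proof.
move=> p'0; apply: size1_polyC.
by have := size_deriv p; rewrite p'0 size_poly0; case: (size p) => [|[|]].
Qed.

Definition antideriv p : {poly R} :=
  \poly_(i < (size p).+1) (if i is j.+1 then p`_j / j.+1%:R else 0).

Lemma antiderivK p : (antideriv p)^`() = p.
Proof.
apply/polyP => i; rewrite coef_deriv coef_poly ltnS.
case: ltnP => [_|le_p_i]; last by rewrite mul0rn nth_default.
by rewrite /= -[_ *+ _]mulr_natr divfK // pnatr_eq0.
Qed.

Definition pint p : R := (antideriv p).[1] - (antideriv p).[-1].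

Lemma pintE p q : q^`() = p -> pint p = q.[1] - q.[-1].
Proof.
move=> q'p; have /deriv_eq0 : (antideriv p - q)^`() = 0.
  by rewrite derivB antiderivK q'p subrr.
rewrite /pint; set c := _`_0 => /(canRL (subrK q)) ->.
by rewrite !hornerD !hornerC; ring.
Qed.

Lemma pint_deriv q : pint q^`() = q.[1] - q.[-1].
Proof. exact: pintE. Qed.

Lemma pintD f g : pint (f + g) = pint f + pint g.
Proof.
rewrite (@pintE _ (antideriv f + antideriv g)) ?derivD ?antiderivK //.
by rewrite /pint !hornerD; ring.
Qed.

Lemma pintZ a f : pint (a *: f) = a * pint f.
Proof.
rewrite (@pintE _ (a *: antideriv f)) ?derivZ ?antiderivK //.
by rewrite /pint !hornerZ; ring.
Qed.

Lemma pint0 : pint 0 = 0.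
Proof. by rewrite -(scale0r 0) pintZ mul0r. Qed.

Lemma pint_sum (I : finType) (F : I -> {poly R}) :
  pint (\sum_i F i) = \sum_i pint (F i).
Proof. exact: (big_morph pint pintD pint0). Qed.

Lemma pint_by_parts f g :
  pint (f * g^`()) = (f * g).[1] - (f * g).[-1] - pint (f^`() * g).
Proof. by rewrite -pint_deriv derivM pintD; ring. Qed.

End PolyIntegral.

Lemma derivn_XsubC_expM (R : comNzRingType) (a : R) m h k : (k <= m)%N ->
  exists2 h', (('X - a%:P) ^+ m * h)^`(k) = ('X - a%:P) ^+ (m - k) * h'
            & h'.[a] = (m ^_ k)%:R * h.[a].
Proof.
elim: k => [_|k IHk lt_k_m]; first by exists h; rewrite ?derivn0 ?subn0 ?mul1r.
have [h' dk h'a] := IHk (ltnW lt_k_m).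
exists (h' *+ (m - k) + ('X - a%:P) * h'^`()).
  rewrite derivnS dk derivM deriv_exp derivXsubC mul1r.
  have -> : (m - k = (m - k.+1).+1)%N by rewrite subnS prednK // subn_gt0.
  by rewrite /= exprS; ring.
rewrite hornerD hornerMn hornerM hornerXsubC subrr mul0r addr0 h'a ffactnSr natrM.
by rewrite -mulr_natr; ring.
Qed.

Lemma eq_of_subr_eq (V : zmodType) (x y a b : V) : a = b -> x - y = a - b -> x = y.
Proof. by move=> -> /eqP; rewrite subrr subr_eq0 => /eqP. Qed.

Lemma sqrN1 (R : pzRingType) : (-1 : R) ^+ 2 = 1.
Proof. by rewrite sqrrN expr1n. Qed.

Section Rodrigues.
Variable R : numFieldType.

Definition rodrigues n : {poly R} := ('X ^+ 2 - 1) ^+ n.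

Lemma rodriguesE (a : R) n : a ^+ 2 = 1 ->
  rodrigues n = ('X - a%:P) ^+ n * ('X + a%:P) ^+ n.
Proof.
move=> a2; rewrite /rodrigues -exprMn -[1 in LHS]polyC1 -a2 rmorphXn.
by congr (_ ^+ _); ring.
Qed.

Lemma derivn_rodrigues_root (a : R) n k : a ^+ 2 = 1 -> (k < n)%N ->
  root (rodrigues n)^`(k) a.
Proof.
move=> a2 lt_k_n; rewrite (rodriguesE _ a2).
have [h -> _] := derivn_XsubC_expM a (('X + a%:P) ^+ n) (ltnW lt_k_n).
by rewrite rootE hornerM horner_exp hornerXsubC subrr expr0n subn_eq0 leqNgt lt_k_n mul0r.
Qed.

Lemma derivn_rodrigues_neq0 (a : R) n : a ^+ 2 = 1 -> (rodrigues n)^`(n).[a] != 0.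
Proof.
move=> a2; rewrite (rodriguesE _ a2).
have [h -> ha] := derivn_XsubC_expM a (('X + a%:P) ^+ n) (leqnn n).
have a_neq0 : a != 0 by move: (oner_neq0 R); rewrite -a2 expf_eq0.
rewrite subnn mul1r ha mulf_neq0 ?pnatr_eq0 -?lt0n ?ffact_gt0 //.
rewrite horner_exp hornerD hornerX hornerC.
by rewrite expf_neq0 // -mulr2n mulrn_eq0.
Qed.

Lemma pint_mul_derivn_rodrigues n k (q : {poly R}) : (k <= n)%N ->
  pint (q * (rodrigues n)^`(k)) = (-1) ^+ k * pint (q^`(k) * rodrigues n).
Proof.
elim: k q => [|k IHk] q lt_k_n; first by rewrite !derivn0 expr0 mul1r.
have /rootP r1 := derivn_rodrigues_root (expr1n R 2) lt_k_n.
have /rootP rN1 := derivn_rodrigues_root (sqrN1 R) lt_k_n.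
rewrite derivnS pint_by_parts !hornerM r1 rN1 !mulr0 subrr sub0r (IHk _ (ltnW lt_k_n)).
by rewrite -derivSn exprS; ring.
Qed.

Lemma size_rodrigues n : size (rodrigues n) = (2 * n).+1.
Proof.
have monic_rod : rodrigues n \is monic by rewrite monic_exp // -polyC1 monicXnsubC.
have := size_exp ('X ^+ 2 - 1 : {poly R}) n.
rewrite -polyC1 size_XnsubC // mulnC -/(rodrigues n).
by move: (monic_neq0 monic_rod); rewrite -size_poly_eq0; case: size => //= ? _ ->.
Qed.

Lemma lead_coef_rodrigues n : lead_coef (rodrigues n) = 1.
Proof. by rewrite lead_coef_exp -polyC1 lead_coefXnsubC // expr1n. Qed.

Lemma rodrigues_ode n :
  ('X ^+ 2 - 1) * (rodrigues n)^`() = ('X * rodrigues n) *+ (2 * n).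
Proof.
rewrite /rodrigues deriv_exp derivB derivXn derivC subr0 /=.
case: n => [|n]; first by rewrite !mulr0n mulr0.
by rewrite /= [_ ^+ n.+1]exprS; ring.
Qed.

Lemma rodrigues_ode_derivn n k :
  ('X ^+ 2 - 1) * (rodrigues n)^`(k.+2) + ('X * (rodrigues n)^`(k.+1)) *+ (2 * k.+1)
    + (rodrigues n)^`(k) *+ (k.+1 * k)
  = ('X * (rodrigues n)^`(k.+1)) *+ (2 * n) + (rodrigues n)^`(k) *+ (2 * n * k.+1).
Proof.
elim: k => [|k IHk].
  have := congr1 deriv (rodrigues_ode n).
  rewrite derivM derivMn derivM derivB derivXn derivC derivX subr0 /= => ode'.
  by apply: (eq_of_subr_eq ode'); ring.
have := congr1 deriv IHk.
rewrite !derivD !derivMn !derivM derivB derivXn derivC derivX subr0 /= -!derivnS => ode'.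
by apply: (eq_of_subr_eq ode'); ring.
Qed.

End Rodrigues.

Section Legendre.
Variable R : realType.
Implicit Types q : {poly R}.

Lemma legendreE n : legendre R n = ((2 ^ n * n`!)%:R)^-1 *: (rodrigues R n)^`(n).
Proof. by []. Qed.

Lemma rodrigues_scale_neq0 n : ((2 ^ n * n`!)%:R)^-1 != 0 :> R.
Proof. by rewrite invr_eq0 pnatr_eq0 muln_eq0 negb_or expn_eq0 -lt0n fact_gt0. Qed.

Lemma legendre_pm1_neq0 (a : R) n : a ^+ 2 = 1 -> (legendre R n).[a] != 0.
Proof.
by move=> a2; rewrite hornerZ mulf_neq0 ?rodrigues_scale_neq0 ?derivn_rodrigues_neq0.
Qed.

Lemma pint_mul_legendre n q : (size q <= n)%N -> pint (q * legendre R n) = 0.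
Proof.
move=> le_q_n; rewrite legendreE -scalerAr pintZ pint_mul_derivn_rodrigues //.
by rewrite derivn_poly0 // mul0r pint0 !mulr0.
Qed.

Lemma size_legendre n : size (legendre R n) = n.+1.
Proof.
have coef_n : (legendre R n)`_n != 0.
  rewrite coefZ mulf_neq0 ?rodrigues_scale_neq0 // coef_derivn.
  have -> : (n + n = (size (rodrigues R n)).-1)%N by rewrite size_rodrigues; lia.
  rewrite -lead_coefE lead_coef_rodrigues mulrn_eq0 oner_eq0 orbF -lt0n.
  by rewrite ffact_gt0 size_rodrigues; lia.
apply/eqP; rewrite eqn_leq [(n < _)%N]ltnNge andbC.
apply/andP; split; first by apply: contra coef_n => /leq_sizeP ->.
apply: leq_trans (size_scale_leq _ _) _; apply/leq_sizeP => i le_n1_i.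
by rewrite coef_derivn nth_default ?mul0rn // size_rodrigues; lia.
Qed.

Lemma legendre_ode n :
  ((1 - 'X ^+ 2) * (legendre R n)^`())^`() = - (legendre R n *+ (n * n.+1)).
Proof.
have ode := rodrigues_ode_derivn R n n.
rewrite legendreE derivZ -scalerAr derivZ scalerMnr -scalerN; congr (_ *: _).
rewrite derivM derivB derivXn derivC sub0r /= -!derivnS.
by symmetry; apply: (eq_of_subr_eq ode); ring.
Qed.

End Legendre.

Lemma diag_mx_comm (F : comPzRingType) n (d : 'rV[F]_n) (G : 'M[F]_n) :
  is_diag_mx G -> diag_mx d *m G = G *m diag_mx d.
Proof.
move=> /diag_mxP [e ->]; rewrite !mulmx_diag; congr diag_mx.
by apply/rowP => j; rewrite !mxE mulrC.
Qed.

Lemma conj_diag_mx_adjoint (F : fieldType) n (M V : 'M[F]_n) (d : 'rV[F]_n) :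
  M \in unitmx -> V \in unitmx -> is_diag_mx (V^T *m M *m V) ->
  invmx M *m (V *m diag_mx d *m invmx V)^T *m M = V *m diag_mx d *m invmx V.
Proof.
move=> unitM unitV /(diag_mx_comm d) comm_dG.
have unitVT : V^T \in unitmx by rewrite unitmx_tr.
rewrite !trmx_mul tr_diag_mx trmx_inv.
have -> : V *m diag_mx d *m invmx V
        = invmx M *m invmx V^T *m (V^T *m M *m V *m diag_mx d) *m invmx V.
  by rewrite -!mulmxA mulKmx // mulKmx.
by rewrite -comm_dG -!mulmxA mulmxV // mulmx1 !mulmxA.
Qed.

Section InterpolatoryQuadrature.
Variables (R : numFieldType) (n : nat) (x : 'I_n -> R).
Hypothesis x_inj : injective x.
Implicit Types p a w : {poly R}.

Definition lagrange_poly (j : 'I_n) : {poly R} :=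
  (\prod_(k | k != j) (x j - x k))^-1 *: \prod_(k | k != j) ('X - (x k)%:P).

Lemma lagrange_poly_node i j : (lagrange_poly j).[x i] = (i == j)%:R.
Proof.
rewrite hornerZ horner_prod.
rewrite [X in _ * X](eq_bigr (fun k => x i - x k)) => [|k _]; last exact: hornerXsubC.
have [->|ij] := eqVneq i j; last by rewrite [X in _ * X](bigD1 i) //= subrr mul0r mulr0.
by rewrite mulVf //; apply/prodf_neq0 => k kj; rewrite subr_eq0 (inj_eq x_inj) eq_sym.
Qed.

Lemma size_lagrange_poly j : (size (lagrange_poly j) <= n)%N.
Proof.
apply: leq_trans (size_scale_leq _ _) _.
rewrite size_prod; last by move=> k _; rewrite polyXsubC_eq0.
under eq_bigr do rewrite size_XsubC.
by rewrite sum_nat_const cardC1 card_ord; have := ltn_ord j; lia.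
Qed.

Lemma lagrange_interp p : (size p <= n)%N -> p = \sum_j p.[x j] *: lagrange_poly j.
Proof.
move=> le_p_n; apply/eqP; rewrite -subr_eq0; apply/eqP.
apply: (roots_geq_poly_eq0 (rs := [seq x j | j <- enum 'I_n])).
- apply/allP => _ /mapP [k _ ->]; rewrite rootE hornerD hornerN horner_sum.
  under eq_bigr do rewrite hornerZ lagrange_poly_node.
  rewrite (bigD1 k) //= eqxx mulr1 big1 ?addr0 ?subrr // => j /negbTE jk.
  by rewrite eq_sym jk mulr0.
- by rewrite map_inj_uniq ?enum_uniq.
- rewrite size_map size_enum_ord.
  apply: leq_trans (size_polyD _ _) _; rewrite size_polyN geq_max le_p_n /=.
  apply: (big_ind (fun q : {poly R} => size q <= n)%N); first by rewrite size_poly0.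
    by move=> q r le_q le_r; apply: leq_trans (size_polyD _ _) _; rewrite geq_max le_q.
  by move=> j _; apply: leq_trans (size_scale_leq _ _) (size_lagrange_poly j).
Qed.

Definition quad p : R := \sum_j pint (lagrange_poly j) * p.[x j].

Lemma quadD p q : quad (p + q) = quad p + quad q.
Proof. by rewrite /quad -big_split; apply: eq_bigr => j _; rewrite hornerD mulrDr. Qed.

Lemma quad_exact p : (size p <= n)%N -> quad p = pint p.
Proof.
move=> le_p_n; rewrite [in RHS](lagrange_interp le_p_n) pint_sum.
by apply: eq_bigr => j _; rewrite pintZ mulrC.
Qed.

Lemma quad_mul_vanishing a w : (forall j, w.[x j] = 0) -> quad (a * w) = 0.
Proof. by move=> w0; rewrite /quad big1 // => j _; rewrite hornerM w0 !mulr0. Qed.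

End InterpolatoryQuadrature.

Lemma root_1subX2 (R : nzRingType) (c : R) : c ^+ 2 = 1 -> root (1 - 'X ^+ 2) c.
Proof. by move=> c2; rewrite rootE hornerD hornerN hornerXn hornerC c2 subrr. Qed.

Section LGL.
Variables (R : realType) (N : nat) (xi : 'I_N.+1 -> R).
Hypotheses (N_gt0 : (0 < N)%N) (xi_LGL : LGL_nodes xi).
Implicit Types p a : {poly R}.

Local Notation P := (legendre R N).
Local Notation lag := (lagrange_poly xi).

Lemma LGL_nodes_inj : injective xi.
Proof.
case: xi_LGL => _ _ xi_mono _ i j eq_ij; apply: val_inj.
by case: (ltngtP i j) => // /xi_mono; rewrite eq_ij ltxx.
Qed.

Lemma LGL_node_first : xi ord0 = -1. Proof. by case: xi_LGL. Qed.
Lemma LGL_node_last : xi ord_max = 1. Proof. by case: xi_LGL. Qed.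

Lemma LGL_node_interior j : j != ord0 -> j != ord_max -> root P^`() (xi j).
Proof.
case: xi_LGL => _ _ _ root_P' j0 jN; apply: root_P'; first by rewrite lt0n.
by rewrite ltn_neqAle -ltnS ltn_ord andbT; apply: contra jN => /eqP/(@ord_inj _ _ ord_max) ->.
Qed.

Definition LGL_nodal : {poly R} := (1 - 'X ^+ 2) * P^`().

Lemma LGL_nodal_node j : LGL_nodal.[xi j] = 0.
Proof.
rewrite hornerM; have [->|j0] := eqVneq j ord0.
  by rewrite LGL_node_first (rootP (root_1subX2 (sqrN1 R))) mul0r.
have [->|jN] := eqVneq j ord_max.
  by rewrite LGL_node_last (rootP (root_1subX2 (expr1n R 2))) mul0r.
by have /rootP -> := LGL_node_interior j0 jN; rewrite mulr0.
Qed.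

Lemma size_legendre_deriv : size P^`() = N.
Proof. by rewrite size_deriv size_legendre. Qed.

Lemma size_1subX2 : size (1 - 'X ^+ 2 : {poly R}) = 3%N.
Proof. by rewrite -opprB size_polyN -polyC1 size_XnsubC. Qed.

Lemma size_LGL_nodal : size LGL_nodal = N.+2.
Proof.
rewrite size_mul ?size_legendre_deriv ?size_1subX2 //.
  by rewrite -size_poly_eq0 size_1subX2.
by rewrite -size_poly_eq0 size_legendre_deriv -lt0n.
Qed.

Lemma pint_mul_LGL_nodal a : (size a <= N.-1)%N -> pint (a * LGL_nodal) = 0.
Proof.
move=> le_a; rewrite /LGL_nodal mulrA pint_by_parts !hornerM.
rewrite (rootP (root_1subX2 (expr1n R 2))) (rootP (root_1subX2 (sqrN1 R))).
rewrite !mulr0 !mul0r subrr sub0r pint_mul_legendre ?oppr0 //.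
rewrite size_deriv -subn1 leq_subLR; apply: leq_trans (size_polyMleq _ _) _.
rewrite size_1subX2; move: (size a) le_a N_gt0 => m; lia.
Qed.

Lemma LGL_quad_exact p : (size p <= N.*2)%N -> quad xi p = pint p.
Proof.
have nodal_neq0 : LGL_nodal != 0 by rewrite -size_poly_eq0 size_LGL_nodal.
move=> le_p; rewrite (divp_eq p LGL_nodal) quadD pintD.
rewrite quad_mul_vanishing; last exact: LGL_nodal_node.
rewrite pint_mul_LGL_nodal; last first.
  by rewrite size_divp // size_LGL_nodal; move: (size p) le_p => m; lia.
rewrite quad_exact //; first exact: LGL_nodes_inj.
by rewrite -ltnS -size_LGL_nodal ltn_modpN0.
Qed.

Lemma LGL_nodal_factor (a b : 'I_N.+1) : a != b ->
  exists2 w, LGL_nodal = w * ('X - (xi b)%:P) * ('X - (xi a)%:P) & size w = N.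
Proof.
move=> ab; have /factor_theorem [w1 def_w1] := introT rootP (LGL_nodal_node a).
have /factor_theorem [w def_w] : root w1 (xi b).
  have := LGL_nodal_node b; rewrite def_w1 hornerM hornerXsubC => /eqP.
  by rewrite mulf_eq0 subr_eq0 (inj_eq LGL_nodes_inj) [b == _]eq_sym (negbTE ab) orbF.
exists w; first by rewrite def_w1 def_w.
have w_neq0 : w != 0.
  by apply/eqP => w0; move: size_LGL_nodal; rewrite def_w1 def_w w0 !mul0r size_poly0.
have := size_LGL_nodal; rewrite def_w1 def_w.
by rewrite !size_Mmonic ?monicXsubC ?mulf_neq0 ?polyXsubC_eq0 // !size_XsubC !addn2; case.
Qed.

Local Notation qweight j := (pint (lag j)).

Lemma quad_weight_nodal_deriv (a b : 'I_N.+1) :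
  qweight a * P.[xi a] * LGL_nodal^`().[xi a] = qweight b * P.[xi b] * LGL_nodal^`().[xi b].
Proof.
have [-> //|ab] := eqVneq a b.
have [w def_nodal size_w] := LGL_nodal_factor ab.
have quad_wP : quad xi (w * P) = 0.
  rewrite LGL_quad_exact ?pint_mul_legendre ?size_w //.
  by apply: leq_trans (size_polyMleq _ _) _; rewrite size_w size_legendre; lia.
have w_node j : j != a -> j != b -> w.[xi j] = 0.
  move=> ja jb; have := LGL_nodal_node j; rewrite def_nodal !hornerM !hornerXsubC.
  move=> /eqP; rewrite !mulf_eq0 !subr_eq0 !(inj_eq LGL_nodes_inj) (negbTE ja) (negbTE jb).
  by rewrite !orbF => /eqP.
move: quad_wP; rewrite /quad (bigD1 a) // (bigD1 b) 1?eq_sym //= big1; last first.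
  by move=> j /andP [ja jb]; rewrite hornerM w_node // mul0r mulr0.
rewrite def_nodal !derivM !derivXsubC !mulr1 !hornerD !hornerM !hornerXsubC !subrr.
rewrite !mulr0 !add0r !addr0 hornerD hornerM hornerXsubC subrr mulr0 add0r => quad_wP.
by apply: (eq_of_subr_eq (congr1 ( *%R (xi a - xi b)) quad_wP)); ring.
Qed.

Lemma quad_weight_first_neq0 : qweight ord0 != 0.
Proof.
(* The rule is exact on (1 - x) P_N', which vanishes at every node except -1. *)
have size_1subX : size (1 - 'X : {poly R}) = 2%N.
  by rewrite -opprB size_polyN -polyC1 size_XsubC.
have eval_1subX (c : R) : (1 - 'X).[c] = 1 - c by rewrite !hornerE.
have size_p : (size ((1 - 'X) * P^`())%R <= N.+1)%N.
  by apply: leq_trans (size_polyMleq _ _) _; rewrite size_1subX size_legendre_deriv.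
have := quad_exact LGL_nodes_inj size_p.
rewrite pint_by_parts pint_mul_legendre; last first.
  by rewrite derivB derivX -polyC1 derivC sub0r size_polyN size_polyC oner_neq0.
rewrite /quad (bigD1 ord0) //= big1 => [|j j0]; last first.
  have [->|jN] := eqVneq j ord_max.
    by rewrite hornerM eval_1subX LGL_node_last subrr mul0r mulr0.
  by rewrite hornerM (rootP (LGL_node_interior j0 jN)) !mulr0.
rewrite !hornerM !eval_1subX LGL_node_first subrr mul0r sub0r subr0 addr0.
apply: contra_eq_neq => ->; rewrite mul0r eq_sym oppr_eq0.
by rewrite mulf_neq0 ?legendre_pm1_neq0 ?sqrN1 // opprK -(natrD _ 1 1) pnatr_eq0.
Qed.

Lemma LGL_scale_neq0 : ((N * N.+1)%:R : R) != 0.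
Proof. by rewrite pnatr_eq0 muln_eq0 negb_or -!lt0n N_gt0. Qed.

Lemma quad_weight_legendre_sq j : qweight j * P.[xi j] ^+ 2 = qweight ord0 * P.[xi ord0] ^+ 2.
Proof.
have := quad_weight_nodal_deriv j ord0.
rewrite /LGL_nodal legendre_ode !hornerN !hornerMn => eq_j0.
apply: (mulIf (_ : - (N * N.+1)%:R != 0)); first by rewrite oppr_eq0 LGL_scale_neq0.
by apply: (eq_of_subr_eq eq_j0); ring.
Qed.

Lemma legendre_LGL_node_neq0 j : P.[xi j] != 0.
Proof.
apply: contra_neq (quad_weight_first_neq0) => Pj0.
have := quad_weight_legendre_sq j; rewrite Pj0 expr0n mulr0 LGL_node_first => /esym/eqP.
by rewrite mulf_eq0 expf_eq0 (negbTE (legendre_pm1_neq0 _ (sqrN1 R))) orbF => /eqP.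
Qed.

Lemma LGL_weight_quad_weight : exists c : R, forall j, LGL_weight xi j = c * qweight j.
Proof.
set k := qweight ord0 * P.[xi ord0] ^+ 2.
have k_neq0 : k != 0.
  by rewrite mulf_neq0 ?quad_weight_first_neq0 ?expf_neq0 ?legendre_LGL_node_neq0.
exists (2 / ((N * N.+1)%:R * k)) => j.
have Pj_neq0 := legendre_LGL_node_neq0 j.
have -> : qweight j = k / P.[xi j] ^+ 2.
  by rewrite /k -(quad_weight_legendre_sq j) mulfK ?expf_neq0.
rewrite /LGL_weight; field.
by rewrite Pj_neq0 k_neq0 pnatr_eq0 -lt0n N_gt0 andbT addrC natr1 pnatr_eq0.
Qed.

Lemma LGL_weight_gt0 j : 0 < LGL_weight xi j.
Proof.
rewrite divr_gt0 // mulr_gt0 ?ltr0n ?muln_gt0 ?N_gt0 //.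
by rewrite exprn_even_gt0 //= legendre_LGL_node_neq0.
Qed.

Lemma LGL_discrete_orthogonality (j k : nat) : (j <= N)%N -> (k <= N)%N -> j != k ->
  \sum_i LGL_weight xi i * ((legendre R j).[xi i] * (legendre R k).[xi i]) = 0.
Proof.
wlog lt_jk : j k / (j < k)%N => [sym le_jN le_kN|le_jN le_kN _].
  case: (ltngtP j k) => [lt_jk|lt_kj|] // _; first by apply: sym; rewrite // ltn_eqF.
  under eq_bigr do rewrite [_ * _.[_]]mulrC.
  by apply: sym; rewrite // ltn_eqF.
have [c wE] := LGL_weight_quad_weight.
under eq_bigr do rewrite wE -mulrA -hornerM.
rewrite -mulr_sumr -/(quad xi _) LGL_quad_exact ?pint_mul_legendre ?mulr0 ?size_legendre //.
apply: leq_trans (size_polyMleq _ _) _; rewrite !size_legendre; lia.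
Qed.

Local Notation G := ((vander_mx xi)^T *m mass_mx xi *m vander_mx xi).
Local Notation norm_factor j := (Num.sqrt ((2 * j + 1)%:R / 2 : R)).

Lemma LGL_vander_gramE i j :
  G i j = norm_factor i * norm_factor j
          * \sum_k LGL_weight xi k * ((legendre R i).[xi k] * (legendre R j).[xi k]).
Proof.
rewrite mul_mx_diag !mxE mulr_sumr; apply: eq_bigr => k _.
by rewrite !mxE /nlegendre; ring.
Qed.

Lemma LGL_vander_gram_diag : is_diag_mx G.
Proof.
apply/is_diag_mxP => i j ij.
by rewrite LGL_vander_gramE LGL_discrete_orthogonality ?mulr0 // -ltnS.
Qed.

Lemma LGL_vander_gram_gt0 i : 0 < G i i.
Proof.
have factor_gt0 : 0 < norm_factor i by rewrite sqrtr_gt0 divr_gt0 // ltr0n addn1.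
rewrite LGL_vander_gramE !mulr_gt0 // (bigD1 ord_max) //=.
apply: (@lt_le_trans _ _ (LGL_weight xi ord_max * ((legendre R i).[xi ord_max] ^+ 2))).
  rewrite mulr_gt0 ?LGL_weight_gt0 // exprn_even_gt0 //= LGL_node_last.
  exact: legendre_pm1_neq0 (expr1n R 2).
rewrite -expr2 lerDl; apply: sumr_ge0 => k _.
by rewrite -expr2 mulr_ge0 ?sqr_ge0 // ltW ?LGL_weight_gt0.
Qed.

Lemma unitmx_LGL_mass : mass_mx xi \in unitmx.
Proof.
rewrite unitmxE unitfE det_diag; apply/prodf_neq0 => i _.
by rewrite mxE lt0r_neq0 ?LGL_weight_gt0.
Qed.

Lemma unitmx_LGL_vander : vander_mx xi \in unitmx.
Proof.
have [d Gd] := diag_mxP _ LGL_vander_gram_diag.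
have : \det G != 0.
  rewrite Gd det_diag; apply/prodf_neq0 => i _.
  by have := LGL_vander_gram_gt0 i; rewrite Gd mxE eqxx mulr1n => /lt0r_neq0.
by rewrite !det_mulmx mulf_eq0 negb_or unitmxE unitfE => /andP [_].
Qed.

End LGL.

Theorem proposition1 (R : realType) (N : nat) (hN : (1 <= N)%N)
  (xi : 'I_N.+1 -> R) (hxi : LGL_nodes xi) (sigma : 'rV[R]_N.+1) :
  aux_filter_mx xi sigma = filter_mx xi sigma.
Proof.
apply: conj_diag_mx_adjoint.
- exact: unitmx_LGL_mass hN hxi.
- exact: unitmx_LGL_vander hN hxi.
- exact: LGL_vander_gram_diag hN hxi.
Qed.
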